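(* Let $U\subseteq\mathbb{R}^d$ be open and convex, let $h:U\to\mathbb{R}$ be convex and twice continuously differentiable, let $f:U\to\mathbb{R}$ be continuously differentiable, let $\mu>0$, and let $\alpha,\beta,\gamma:\mathbb{R}\to\mathbb{R}$ be smooth functions. Define the (second Bregman) Lagrangian $$\mathcal{L}(x,v,t)=e^{\alpha_t+\gamma_t+\beta_t}\Big(\mu\, D_h\big(x+e^{-\alpha_t}v,\;x\big)-f(x)\Big),$$ for $(x,v,t)$ with $x,\,x+e^{-\alpha_t}v\in U$. Assume $\dot\gamma_t=e^{\alpha_t}$ for all $t$. Then a twice differentiable curve $t\mapsto X_t$ satisfies the Euler–Lagrange equation $$\frac{\partial\mathcal{L}}{\partial x}(X_t,\dot X_t,t)=\frac{d}{dt}\frac{\partial\mathcal{L}}{\partial v}(X_t,\dot X_t,t)$$ if and only if $$\frac{d}{dt}\nabla h\big(X_t+e^{-\alpha_t}\dot X_t\big)=\dot\beta_t\,\nabla h(X_t)-\dot\beta_t\,\nabla h\big(X_t+e^{-\alpha_t}\dot X_t\big)-\frac{e^{\alpha_t}}{\mu}\nabla f(X_t).$$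
   Context: The Bregman divergence of $h$ is $D_h(y,x)=h(y)-h(x)-\langle\nabla h(x),y-x\rangle$. Dots denote time derivatives. *)

From HB Require Import structures.
From mathcomp Require Import all_boot all_order all_algebra.
From mathcomp Require Import all_classical all_reals all_analysis.
Set Implicit Arguments. Unset Strict Implicit. Unset Printing Implicit Defensive.
Import Order.TTheory GRing.Theory Num.Theory.
Import numFieldNormedType.Exports.
Local Open Scope classical_set_scope.
Local Open Scope ring_scope.

Section Defs.
Variables (R : realType) (d : nat).
Implicit Types (U : set 'rV[R]_d) (f : 'rV[R]_d -> R).

Definition basis_vec (i : 'I_d) : 'rV[R]_d := delta_mx 0 i.

Definition partial (i : 'I_d) f (x : 'rV[R]_d) : R := 'D_(basis_vec i) f x.

Definition grad f (x : 'rV[R]_d) : 'rV[R]_d := \row_i partial i f x.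

Definition dotp (u v : 'rV[R]_d) : R := \sum_i u 0 i * v 0 i.

Definition bregman f (y x : 'rV[R]_d) : R := f y - f x - dotp (grad f x) (y - x).

Definition convex_on U f : Prop :=
  forall x y, U x -> U y -> forall l : R, 0 <= l <= 1 ->
    f (l *: x + (1 - l) *: y) <= l * f x + (1 - l) * f y.

Definition C1_on U f : Prop :=
  (forall x, U x -> differentiable f x) /\
  (forall i, {within U, continuous (partial i f)}).

Definition C2_on U f : Prop := C1_on U f /\ (forall i, C1_on U (partial i f)).

End Defs.

Definition smooth (R : realType) (g : R -> R) : Prop :=
  forall (n : nat) (t : R), derivable (derive1n n g) t 1.

Definition twice_diff_curve (R : realType) (d : nat) (X : R -> 'rV[R]_d) : Prop :=
  (forall t : R, derivable X t 1) /\ (forall t : R, derivable (derive1 X) t 1).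

Definition bregman_lagrangian (R : realType) (d : nat)
  (h f : 'rV[R]_d -> R) (mu : R) (a b g : R -> R)
  (x v : 'rV[R]_d) (t : R) : R :=
  expR (a t + g t + b t) *
    (mu * bregman h (x + expR (- a t) *: v) x - f x).

From HB Require Import structures.
From mathcomp Require Import all_boot all_order all_algebra.
From mathcomp Require Import all_classical all_reals all_analysis.
From mathcomp Require Import ring lra.
Import Order.TTheory GRing.Theory Num.Theory.
Import numFieldNormedType.Exports.
Local Open Scope classical_set_scope.
Local Open Scope ring_scope.
Set Implicit Arguments. Unset Strict Implicit. Unset Printing Implicit Defensive.

(* The velocity gradient of the Lagrangian is
   dL/dv = mu e^(gamma+beta) (grad h(X + e^(-alpha) X') - grad h(X)),
   so its time derivative contains -mu e^(gamma+beta) Hess h(X) X'.  The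
   position gradient contains -mu e^(alpha+gamma+beta) Hess h(X) (e^(-alpha) X'),
   which is the same term once the Hessian is known to be symmetric (Schwarz's
   theorem, which follows from the mean value theorem as h is C^2).  Using
   gamma' = e^alpha, the difference of the two sides of the Euler-Lagrange
   equation is mu e^(gamma+beta) times the difference of the two sides of the
   stated equation. *)

Section DirectionalDerivatives.
Variables (R : numFieldType) (V W : normedModType R).

Lemma is_derive_comp (U : normedModType R) (F : V -> W) (Y : U -> V) x u y' :
  differentiable Y x -> is_derive x u Y y' -> differentiable F (Y x) ->
  is_derive x u (F \o Y) ('D_y' F (Y x)).
Proof.
move=> dY [_ <-] dF; have dFY := differentiable_comp dY dF.
split; first exact: diff_derivable.
by rewrite !deriveE // diff_comp.
Qed.

Lemma is_derive_comp_curve (F : V -> W) (Y : R -> V) t :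
  derivable Y t 1 -> differentiable F (Y t) ->
  is_derive t 1 (F \o Y) ('D_(derive1 Y t) F (Y t)).
Proof.
move=> dY dF; rewrite derive1E.
by apply: (is_derive_comp _ (derivableP dY) dF); apply/derivable1_diffP.
Qed.

Lemma is_derive_affine (q a : V) (r : R) : is_derive r 1 (fun s : R => q + s *: a) a.
Proof.
have Hd := is_diffD (is_diff_cst q r) (is_diff_scalel r a).
have dl : differentiable (cst q + *:%R^~ a) r by exact: ex_diff.
by split; [exact: diff_derivable|rewrite deriveE // diff_val /= add0r scale1r].
Qed.

Lemma is_derive_line (F : V -> W) (q a : V) (r : R) :
  differentiable F (q + r *: a) ->
  is_derive r 1 (fun s : R => F (q + s *: a)) ('D_a F (q + r *: a)).
Proof.
move=> dF; have Hl := is_derive_affine q a r.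
by apply: (is_derive_comp _ Hl dF); apply/derivable1_diffP; case: Hl.
Qed.

Lemma derive_dirZ (F : V -> W) p (c : R) w :
  differentiable F p -> 'D_(c *: w) F p = c *: 'D_w F p.
Proof. by move=> dF; rewrite !deriveE // linearZ. Qed.

Lemma is_derive_sum_fun n (F : 'I_n -> V -> W) x v (dF : 'I_n -> W) :
  (forall j, is_derive x v (F j) (dF j)) ->
  is_derive x v (fun y => \sum_(j < n) F j y) (\sum_(j < n) dF j).
Proof.
move=> dFx; have -> : (fun y => \sum_(j < n) F j y) = \sum_(j < n) F j.
  by apply/funext => y; rewrite fct_sumE.
exact: is_derive_sum.
Qed.

End DirectionalDerivatives.

Section RowDerivatives.
Variables (R : realFieldType) (V : normedModType R).

Lemma is_derive_mx_coord m n (M : V -> 'M[R]_(m, n)) x v dM i j :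
  is_derive x v M dM -> is_derive x v (fun y => M y i j) (dM i j).
Proof.
move=> [dMx <-]; split; first by move/derivable_mxP: dMx; apply.
by rewrite derive_mx // mxE.
Qed.

Lemma is_derive_row n (M : V -> 'rV[R]_n) x v (m : 'I_n -> R) :
  (forall j, is_derive x v (fun y => M y 0 j) (m j)) -> is_derive x v M (\row_j m j).
Proof.
move=> dM; have dMx : derivable M x v.
  by apply/derivable_mxP => i j; rewrite (ord1 i); case: (dM j).
split=> //; apply/rowP => j.
by rewrite derive_mx // !mxE; case: (dM j).
Qed.

End RowDerivatives.

Lemma is_derive1_scale_row (R : realFieldType) n (k : R -> R) (M : R -> 'rV[R]_n)
    (t dk : R) dM :
  is_derive t 1 k dk -> is_derive t 1 M dM ->
  is_derive t 1 (fun s => k s *: M s) (dk *: M t + k t *: dM).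
Proof.
move=> dkt dMt; have -> : dk *: M t + k t *: dM = \row_j (k t * dM 0 j + M t 0 j * dk).
  by apply/rowP => j; rewrite !mxE mulrC addrC.
apply: is_derive_row => j.
have -> : (fun s => (k s *: M s) 0 j) = k * (fun s => M s 0 j).
  by apply/funext => s; rewrite mxE.
exact: is_deriveM dkt (is_derive_mx_coord 0 j dMt).
Qed.

Section Gradient.
Variables (R : realType) (d : nat).
Implicit Types (F h : 'rV[R]_d -> R) (p v w : 'rV[R]_d).

Definition hessian_mul h p w : 'rV[R]_d := \row_i 'D_w (partial i h) p.

Lemma derive_row_sum F p v :
  differentiable F p -> 'D_v F p = \sum_j v 0 j * partial j F p.
Proof.
move=> dF; rewrite deriveE // [in LHS](row_sum_delta v) linear_sum.
by apply: eq_bigr => j _; rewrite linearZ /partial /basis_vec deriveE.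
Qed.

Lemma grad_row F p (m : 'I_d -> R) :
  (forall i, is_derive p (basis_vec R i) F (m i)) -> grad F p = \row_i m i.
Proof. by move=> dF; apply/rowP => i; rewrite !mxE; case: (dF i). Qed.

Lemma is_derive1_grad_comp h (Y : R -> 'rV[R]_d) (t : R) :
  derivable Y t 1 -> (forall i, differentiable (partial i h) (Y t)) ->
  is_derive t 1 (fun s => grad h (Y s)) (hessian_mul h (Y t) (derive1 Y t)).
Proof.
move=> dY dh; apply: is_derive_row => j.
have -> : (fun s => grad h (Y s) 0 j) = partial j h \o Y.
  by apply/funext => s; rewrite mxE.
exact: is_derive_comp_curve.
Qed.

End Gradient.

Lemma norm_basis_vec_le1 (R : realType) d (i : 'I_d) : `|basis_vec R i| <= 1.
Proof.
rewrite [leLHS]/Num.Def.normr/= mx_normrE (bigmax_le _ ler01) //= => -[k l] _.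
by rewrite /basis_vec mxE; case: (_ && _); rewrite ?normr1 ?normr0.
Qed.

Lemma dist_le_of_half (R : numFieldType) (a b c c' e : R) :
  `|a - c| < e / 2 -> `|b - c'| < e / 2 -> c = c' -> `|a - b| <= e.
Proof.
move=> ac bc cc; rewrite -cc in bc.
rewrite (le_trans (ler_distD c _ _)) // [leRHS](splitr e).
by rewrite lerD // ltW // distrC.
Qed.

Section Schwarz.
Variables (R : realType) (d : nat) (U : set 'rV[R]_d) (h : 'rV[R]_d -> R).

Definition second_difference (p a b : 'rV[R]_d) (s : R) : R :=
  h (p + s *: a + s *: b) - h (p + s *: a) - h (p + s *: b) + h p.

Lemma second_difference_sym p a b s :
  second_difference p a b s = second_difference p b a s.
Proof. by rewrite /second_difference [p + s *: b + _]addrAC; ring. Qed.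

Lemma second_difference_mvt p i j (s : R) : 0 < s ->
  (forall q, U q -> differentiable h q) ->
  (forall q, U q -> differentiable (partial i h) q) ->
  (forall u w, 0 <= u <= s -> 0 <= w <= s ->
     U (p + u *: basis_vec R i + w *: basis_vec R j)) ->
  exists u w, [/\ 0 <= u <= s, 0 <= w <= s &
    second_difference p (basis_vec R i) (basis_vec R j) s
    = s * s * partial j (partial i h) (p + u *: basis_vec R i + w *: basis_vec R j)].
Proof.
rewrite /second_difference; set a := basis_vec R i; set b := basis_vec R j.
move=> s0 dh dhi Usq.
have itv_cc r : r \in `[0, s] -> 0 <= r <= s by rewrite in_itv.
have U_ab r : 0 <= r <= s -> U (p + s *: b + r *: a).
  by move=> hr; rewrite addrAC; apply: Usq; rewrite // lexx ltW.
have U_a r : 0 <= r <= s -> U (p + r *: a).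
  move=> hr; rewrite -[p + r *: a]addr0 -(scale0r b).
  by apply: Usq; rewrite // lexx ltW.
pose phi r := h (p + s *: b + r *: a) - h (p + r *: a).
have dphi r : 0 <= r <= s -> is_derive r 1 phi
    (partial i h (p + s *: b + r *: a) - partial i h (p + r *: a)).
  move=> hr; apply: is_deriveB; apply: is_derive_line; [exact/dh/U_ab|exact/dh/U_a].
have [u uI Eu] := MVT s0 (fun x xI => dphi x (itv_cc x (subset_itv_oo_cc xI)))
  (derivable_within_continuous (fun x xI => @ex_derive _ _ _ _ _ _ _ (dphi x (itv_cc x xI)))).
have us : 0 <= u <= s by apply: itv_cc; exact: subset_itv_oo_cc.
pose psi r := partial i h (p + u *: a + r *: b).
have dpsi r : 0 <= r <= s ->
    is_derive r 1 psi (partial j (partial i h) (p + u *: a + r *: b)).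
  by move=> hr; apply: is_derive_line; apply/dhi/Usq.
have [w wI Ew] := MVT s0 (fun x xI => dpsi x (itv_cc x (subset_itv_oo_cc xI)))
  (derivable_within_continuous (fun x xI => @ex_derive _ _ _ _ _ _ _ (dpsi x (itv_cc x xI)))).
exists u, w; split => //; first by apply: itv_cc; exact: subset_itv_oo_cc.
move: Eu Ew; rewrite /phi /psi !scale0r !addr0 subr0 => Eu Ew.
rewrite [p + s *: b + u *: a]addrAC Ew [p + s *: b + s *: a]addrAC in Eu.
by rewrite [RHS]mulrC mulrA -Eu; ring.
Qed.

Lemma partial_comm p i j : open U -> C2_on U h -> U p ->
  partial i (partial j h) p = partial j (partial i h) p.
Proof.
move=> oU [[dh _] d2h] Up.
have cont k l : {for p, continuous (partial l (partial k h))}.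
  by move: ((d2h k).2 l); rewrite continuous_open_subspace // => /(_ p (mem_set Up)).
apply/eqP; rewrite -subr_eq0 -normr_le0; apply/ler_addgt0Pr => e e0; rewrite add0r.
have e2 : 0 < e / 2 by rewrite divr_gt0.
have near_close k l : \forall x \near p,
    `|partial l (partial k h) p - partial l (partial k h) x| < e / 2.
  by move/cvgrPdist_lt: (cont k l); apply.
have [r r0 Hr] := (nbhs_ballP p _).1 (filterI (open_nbhs_nbhs (conj oU Up))
  (filterI (near_close i j) (near_close j i))).
pose s := r / 3; have s0 : 0 < s by rewrite divr_gt0.
have sq_ball u w k l : 0 <= u <= s -> 0 <= w <= s ->
    ball p r (p + u *: basis_vec R k + w *: basis_vec R l).
  move=> /andP[u0 us] /andP[w0 ws].
  rewrite -ball_normE /= -addrA opprD addrA subrr add0r normrN.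
  apply: (le_lt_trans (ler_normD _ _)); rewrite !normrZ !ger0_norm //.
  have := norm_basis_vec_le1 R k; have := norm_basis_vec_le1 R l.
  have -> : r = 3 * s by rewrite /s mulrC divfK.
  by nra.
(* On a small enough square both mixed partials are e/2-close to their values
   at p, and the symmetric second difference equals s^2 times each of them at
   some point of that square. *)
have [u1 [w1 [u1s w1s E1]]] := second_difference_mvt (p:=p) (i:=i) (j:=j) s0 dh
  (d2h i).1 (fun u w hu hw => (Hr _ (sq_ball u w i j hu hw)).1).
have [u2 [w2 [u2s w2s E2]]] := second_difference_mvt (p:=p) (i:=j) (j:=i) s0 dh
  (d2h j).1 (fun u w hu hw => (Hr _ (sq_ball u w j i hu hw)).1).
have ss0 : s * s != 0 by rewrite mulf_neq0 // gt_eqF.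
have E := mulfI ss0 (etrans (esym E2) (etrans (second_difference_sym _ _ _ _) E1)).
have [_ [close1 _]] := Hr _ (sq_ball u1 w1 i j u1s w1s).
have [_ [_ close2]] := Hr _ (sq_ball u2 w2 j i u2s w2s).
exact: dist_le_of_half close2 close1 E.
Qed.

End Schwarz.

Section BregmanDerivatives.
Variables (R : realType) (d : nat).
Implicit Types (h f : 'rV[R]_d -> R) (g x u v w e : 'rV[R]_d).

Lemma dotp_basis g i : dotp g (basis_vec R i) = g 0 i.
Proof.
rewrite /dotp (bigD1 i) //= /basis_vec mxE !eqxx mulr1 big1 ?addr0 // => j ji.
by rewrite mxE (negbTE ji) andbF mulr0.
Qed.

Lemma dotpZr g (c : R) u : dotp g (c *: u) = c * dotp g u.
Proof. by rewrite /dotp mulr_sumr; apply: eq_bigr => k _; rewrite mxE mulrCA. Qed.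

Lemma is_derive_dotpr g u e : is_derive u e (dotp g) (dotp g e).
Proof.
apply: is_derive_sum_fun => k.
by have := is_deriveZ (g 0 k) (is_derive_mx_coord 0 k (is_derive_id u e)).
Qed.

Lemma is_derive_dotp_grad (U : set 'rV[R]_d) h x w i :
  open U -> C2_on U h -> U x ->
  is_derive x (basis_vec R i) (fun y => dotp (grad h y) w) ('D_w (partial i h) x).
Proof.
move=> oU h2 Ux; have [_ d2h] := h2.
have -> : 'D_w (partial i h) x = \sum_k w 0 k * partial i (partial k h) x.
  rewrite derive_row_sum; last exact: (d2h i).1.
  by apply: eq_bigr => k _; rewrite (partial_comm _ _ oU h2 Ux).
apply: is_derive_sum_fun => k.
have dhk : is_derive x (basis_vec R i) (partial k h) (partial i (partial k h) x).
  exact/derivableP/diff_derivable/(d2h k).1.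
under eq_fun do rewrite /grad mxE mulrC.
by have := is_deriveZ (w 0 k) dhk.
Qed.

Lemma is_derive_bregman_x (U : set 'rV[R]_d) h x w i :
  open U -> C2_on U h -> U x -> U (x + w) ->
  is_derive x (basis_vec R i) (fun y => bregman h (y + w) y)
    (partial i h (x + w) - partial i h x - 'D_w (partial i h) x).
Proof.
move=> oU h2 Ux Uxw; have [[dh _] _] := h2.
have -> : (fun y => bregman h (y + w) y) = fun y => h (y + w) - h y - dotp (grad h y) w.
  by apply/funext => y; rewrite /bregman [y + w - y]addrAC subrr add0r.
have Hs := is_diffD (is_diff_id x) (is_diff_cst w x).
have dS : differentiable (id + cst w) x by exact: ex_diff.
have Hd : is_derive x (basis_vec R i) (fun y => y + w) (basis_vec R i).
  exact: is_derive_eq (is_deriveD (is_derive_id _ _) (is_derive_cst w _ _)) (addr0 _).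
have Hhw : is_derive x (basis_vec R i) (fun y => h (y + w)) (partial i h (x + w)).
  by have := is_derive_comp dS Hd (dh _ Uxw).
have Hh : is_derive x (basis_vec R i) h (partial i h x).
  exact/derivableP/diff_derivable/dh.
by have := is_deriveB (is_deriveB Hhw Hh) (is_derive_dotp_grad w i oU h2 Ux).
Qed.

Lemma is_derive_bregman_v h x (c : R) u e : differentiable h (x + c *: u) ->
  is_derive u e (fun z => bregman h (x + c *: z) x)
    (c * ('D_e h (x + c *: u) - dotp (grad h x) e)).
Proof.
move=> dh.
have -> : (fun z => bregman h (x + c *: z) x) =
    fun z => h (x + c *: z) - h x - c * dotp (grad h x) z.
  by apply/funext => z; rewrite /bregman [x + _ - x]addrAC subrr add0r dotpZr.
have Hs := is_diffD (is_diff_cst x u) (is_diff_scaler c u).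
have dS : differentiable (cst x + *:%R c) u by exact: ex_diff.
have Hd : is_derive u e (fun z => x + c *: z) (c *: e).
  exact: is_derive_eq
    (is_deriveD (is_derive_cst x _ _) (is_deriveZ c (is_derive_id u e))) (add0r _).
have Hh := is_derive_comp dS Hd dh; rewrite derive_dirZ // in Hh.
apply: is_derive_eq (is_deriveB (is_deriveB Hh (is_derive_cst (h x) u e))
  (is_deriveZ c (is_derive_dotpr (grad h x) u e))) _.
by rewrite subr0 mulrBr.
Qed.

Lemma grad_bregman_lagrangian_x (U : set 'rV[R]_d) h f mu (a b g : R -> R) x v t :
  open U -> C2_on U h -> U x -> U (x + expR (- a t) *: v) -> differentiable f x ->
  grad (fun y => bregman_lagrangian h f mu a b g y v t) x =
  expR (a t + g t + b t) *: (mu *: (grad h (x + expR (- a t) *: v) - grad h x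
     - expR (- a t) *: hessian_mul h x v) - grad f x).
Proof.
move=> oU h2 Ux Uy df.
have dL i := is_deriveZ (expR (a t + g t + b t)) (is_deriveB
  (is_deriveZ mu (is_derive_bregman_x i oU h2 Ux Uy)) (derivableP (diff_derivable df))).
rewrite (grad_row dL); apply/rowP => i; rewrite !mxE derive_dirZ //.
exact: (h2.2 i).1.
Qed.

Lemma grad_bregman_lagrangian_v h f mu (a b g : R -> R) x v t :
  differentiable h (x + expR (- a t) *: v) ->
  grad (fun u => bregman_lagrangian h f mu a b g x u t) v =
  (mu * expR (g t + b t)) *: (grad h (x + expR (- a t) *: v) - grad h x).
Proof.
move=> dh; set c := expR (- a t); set E := expR (a t + g t + b t).
have dL i : is_derive v (basis_vec R i) (fun u => bregman_lagrangian h f mu a b g x u t)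
    (E * (mu * (c * (partial i h (x + c *: v) - partial i h x)))).
  apply: is_derive_eq (is_deriveZ E (is_deriveB (is_deriveZ mu
    (is_derive_bregman_v (basis_vec R i) dh)) (is_derive_cst (f x) v _))) _.
  by rewrite dotp_basis mxE subr0.
have EcK : E * c = expR (g t + b t) by rewrite -expRD; congr expR; ring.
by rewrite (grad_row dL); apply/rowP => i; rewrite !mxE -EcK; ring.
Qed.

End BregmanDerivatives.

Lemma euler_lagrange_rowP (R : fieldType) n (mu E K a c b : R)
    (A B S A' G : 'rV[R]_n) :
  mu != 0 -> K != 0 -> E = a * K -> a * c = 1 ->
  (E *: (mu *: (A - B - c *: S) - G)
     = (mu * (K * (a + b))) *: (A - B) + (mu * K) *: (A' - S))
  <-> (A' = b *: B - b *: A - (a / mu) *: G).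
Proof.
move=> mu0 K0 -> ac.
have a0 : a != 0 by apply: contra_eq_neq ac => ->; rewrite mul0r eq_sym oner_neq0.
have {ac}-> : c = a^-1 by rewrite -[a^-1]mulr1 -ac mulKf.
have muK0 : mu * K != 0 by rewrite mulf_neq0.
have D j : ((a * K) *: (mu *: (A - B - a^-1 *: S) - G)) 0 j
    - ((mu * (K * (a + b))) *: (A - B) + (mu * K) *: (A' - S)) 0 j
    = mu * K * ((b *: B - b *: A - (a / mu) *: G) 0 j - A' 0 j).
  by rewrite !mxE; field; rewrite mu0 a0.
split => Eq; apply/rowP => j.
  move/eqP: (D j); rewrite Eq subrr eq_sym mulf_eq0 (negbTE muK0) /= subr_eq0.
  by move=> /eqP ->.
by apply/eqP; rewrite -subr_eq0 D Eq subrr mulr0.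
Qed.

Section AlongCurve.
Variables (R : realType) (d : nat) (U : set 'rV[R]_d) (h f : 'rV[R]_d -> R) (mu : R).
Variables (alpha beta gamma : R -> R) (X : R -> 'rV[R]_d).
Hypothesis h2 : C2_on U h.
Hypotheses (dalpha : forall t, derivable alpha t 1) (dbeta : forall t, derivable beta t 1).
Hypotheses (dgamma : forall t, derivable gamma t 1).
Hypothesis gamma'E : forall t, derive1 gamma t = expR (alpha t).
Hypotheses (dX : forall t, derivable X t 1) (dX' : forall t, derivable (derive1 X) t 1).
Hypotheses (UX : forall t, U (X t)) (UZ : forall t, U (X t + expR (- alpha t) *: derive1 X t)).

Local Notation L := (bregman_lagrangian h f mu alpha beta gamma).
Local Notation Z s := (X s + expR (- alpha s) *: derive1 X s).
Local Notation K s := (expR (gamma s + beta s)).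

Lemma derive1_grad_v_lagrangian_curve (t : R) :
  derive1 (fun s => grad (fun v => L (X s) v s) (derive1 X s)) t =
  (mu * (K t * (expR (alpha t) + derive1 beta t))) *: (grad h (Z t) - grad h (X t))
  + (mu * K t) *: (derive1 (fun s => grad h (Z s)) t - hessian_mul h (X t) (derive1 X t)).
Proof.
have dh2 q : U q -> forall i, differentiable (partial i h) q := fun Uq i => (h2.2 i).1 q Uq.
have gradv (s : R) : grad (fun v => L (X s) v s) (derive1 X s) =
    (mu * K s) *: (grad h (Z s) - grad h (X s)).
  exact: grad_bregman_lagrangian_v (h2.1.1 _ (UZ s)).
have dK : is_derive t 1 (fun s => K s) (K t * (expR (alpha t) + derive1 beta t)).
  have := is_derive1_comp (is_derive_expR _)
    (is_deriveD (derivableP (@dgamma t)) (derivableP (@dbeta t))).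
  by rewrite -!derive1E gamma'E.
have dc : is_derive t 1 (fun s => expR (- alpha s)) (expR (- alpha t) * - derive1 alpha t).
  rewrite derive1E.
  by have := is_derive1_comp (is_derive_expR _) (is_deriveN (derivableP (@dalpha t))).
have [dZ _] := is_deriveD (derivableP (@dX t))
  (is_derive1_scale_row dc (derivableP (@dX' t))).
have [dgZ _] := is_derive1_grad_comp dZ (dh2 _ (UZ t)).
have HgZ : is_derive t 1 (fun s => grad h (Z s)) (derive1 (fun s => grad h (Z s)) t).
  by rewrite derive1E; exact: derivableP dgZ.
have Hd : is_derive t 1 (fun s => (mu * K s) *: (grad h (Z s) - grad h (X s)))
    ((mu * (K t * (expR (alpha t) + derive1 beta t))) *: (grad h (Z t) - grad h (X t))
     + (mu * K t) *: (derive1 (fun s => grad h (Z s)) t - hessian_mul h (X t) (derive1 X t))).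
  by have := is_derive1_scale_row (is_deriveZ mu dK)
    (is_deriveB HgZ (is_derive1_grad_comp (@dX t) (dh2 _ (UX t)))).
by rewrite (funext gradv) derive1E; case: Hd.
Qed.

End AlongCurve.

Unset Implicit Arguments. Set Strict Implicit.

Theorem proposition1 (R : realType) (d : nat) (U : set 'rV[R]_d)
  (h f : 'rV[R]_d -> R) (mu : R) (alpha beta gamma : R -> R)
  (X : R -> 'rV[R]_d) :
  open U -> convex_set U ->
  convex_on U h -> C2_on U h -> C1_on U f -> 0 < mu ->
  smooth alpha -> smooth beta -> smooth gamma ->
  (forall t, derive1 gamma t = expR (alpha t)) ->
  twice_diff_curve X ->
  (forall t, U (X t)) ->
  (forall t, U (X t + expR (- alpha t) *: derive1 X t)) ->
  let L := bregman_lagrangian h f mu alpha beta gamma in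
  (forall t,
     grad (fun x => L x (derive1 X t) t) (X t) =
     derive1 (fun s => grad (fun v => L (X s) v s) (derive1 X s)) t)
  <->
  (forall t,
     derive1 (fun s => grad h (X s + expR (- alpha s) *: derive1 X s)) t =
     derive1 beta t *: grad h (X t)
     - derive1 beta t *: grad h (X t + expR (- alpha t) *: derive1 X t)
     - (expR (alpha t) / mu) *: grad f (X t)).
Proof.
move=> oU _ _ h2 [df _] mu0 Sa Sb Sg gamma'E [dX dX'] UX UZ L; rewrite /L.
have gradx (t : R) :=
  grad_bregman_lagrangian_x mu beta gamma oU h2 (UX t) (UZ t) (df _ (UX t)).
have da (t : R) : derivable alpha t 1 := Sa 0%N t.
have db (t : R) : derivable beta t 1 := Sb 0%N t.
have dg (t : R) : derivable gamma t 1 := Sg 0%N t.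
have dgradv := derive1_grad_v_lagrangian_curve f mu h2 da db dg gamma'E dX dX' UX UZ.
have EaK (t : R) :
    expR (alpha t + gamma t + beta t) = expR (alpha t) * expR (gamma t + beta t).
  by rewrite -expRD addrA.
have ac (t : R) : expR (alpha t) * expR (- alpha t) = 1 by rewrite -expRD subrr expR0.
have key (t : R) := euler_lagrange_rowP (derive1 beta t)
  (grad h (X t + expR (- alpha t) *: derive1 X t)) (grad h (X t))
  (hessian_mul h (X t) (derive1 X t))
  (derive1 (fun s => grad h (X s + expR (- alpha s) *: derive1 X s)) t) (grad f (X t))
  (lt0r_neq0 mu0) (lt0r_neq0 (expR_gt0 (gamma t + beta t))) (EaK t) (ac t).
split => EL t.
  by apply/key; move: (EL t); rewrite gradx dgradv.
by rewrite gradx dgradv; apply/key; exact: EL t.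
Qed.
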